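(* Consider the Brinkmann spacetime $\mathrm{d}s^{2} = -2\,\mathrm{d}u\,\mathrm{d}v + \mathrm{d}x^{2} + \mathrm{d}y^{2} + h(u,x,y)\,\mathrm{d}u^{2}$ coupled to a monochromatic, arbitrarily polarized, weakly transversely modulated electromagnetic wave in the Maxwell-consistent completion: the carrier is $$a_x(u)=\tfrac{\sqrt2E_0}{\omega}\big(\cos\chi\cos\theta\cos\psi-\sigma\sin\chi\sin\theta\sin\psi\big),\quad a_y(u)=\tfrac{\sqrt2E_0}{\omega}\big(\cos\chi\cos\theta\sin\psi+\sigma\sin\chi\sin\theta\cos\psi\big),$$ with $\theta(u)=\frac{\omega}{c}u+\phi_0$, and the potential is $A_u=\gamma\,\mathbf a'(u)\cdot\nabla w$, $A_i=a_i(u)+\gamma\,\partial_i[\mathbf a(u)\cdot\nabla w+\psi_{\rm H}]$, $A_v=0$, where $\Delta_\perp w=f$ for an arbitrary smooth profile $f(x,y)$, $0<|\gamma|\ll 1$, and the harmonic complement $\psi_{\rm H}$ ($\Delta_\perp\psi_{\rm H}=0$) is removed (bounded/decaying on $\mathbb R^2$, hence constant in $(x,y)$). Let $h$ be the particular solution of the Einstein equation $\Delta_\perp h=-\frac{16\pi G}{c^4}T_{uu}$, $T_{uu}=\frac1{\mu_0}(F_{ux}^2+F_{uy}^2)$, with no additional vacuum modes (solutions of $\Delta_\perp h_{\rm vac}=0$) and no $u$-only terms, namely $h=-\mathcal C\,\mathrm{tr}\,\mathbf D(u)\,r^2+\mathcal O(\gamma^2)$. Then the cycle-averaged curvature satisfies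 $$R^{\langle\cdot\rangle}_{uiuj}(x,y):=\big\langle R_{uiuj}\big\rangle_u=\mathcal C\,\delta_{ij}+\mathcal O(\gamma^2),$$ independent of the polarization parameters $(\psi,\chi,\sigma)$ and of the transverse modulation $f$ at $\mathcal O(\gamma)$.
   Context: Coordinates $(u,v,x,y)$, $i,j\in\{x,y\}$, $r^2=x^2+y^2$, $\Delta_\perp=\partial_x^2+\partial_y^2$, $\nabla=(\partial_x,\partial_y)^\top$, $\mathbf a=(a_x,a_y)^\top$, prime $=\mathrm d/\mathrm du$. The polarization is parametrized by orientation angle $\psi$, ellipticity angle $\chi\in[-\pi/4,\pi/4]$ ($\chi=0$ linear, $|\chi|=\pi/4$ circular), and handedness $\sigma=\pm1$; $E_0>0$ is the amplitude, $\omega$ the angular frequency conjugate to $u$, $\phi_0$ a phase. $\mathbf D(u)=\widehat{\mathbf a}'(u)\widehat{\mathbf a}'(u)^\top$ with $\widehat{\mathbf a}'=\frac{c}{E_0}\mathbf a'$, so $\mathrm{tr}\,\mathbf D(u)=1-\cos2\chi\cos(2\theta)$. $\mathcal C=\frac{4\pi GE_0^2}{c^6\mu_0}$, with $G$ Newton's constant, $c$ the speed of light, $\mu_0$ the vacuum permeability. The only independent Riemann components are $R_{uiuj}=-\frac12\partial_i\partial_j h$. $\langle\cdot\rangle_u$ denotes the average over one period in $u$ (equivalently over the phase $\theta$). *)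

From Stdlib Require Import Reals Lra.
From Coquelicot Require Import Coquelicot.
Open Scope R_scope.

Inductive tidx := Ix | Iy.

Definition kdelta (i j : tidx) : R :=
  match i, j with Ix, Ix => 1 | Iy, Iy => 1 | _, _ => 0 end.

Definition theta (omega c phi0 u : R) : R := omega / c * u + phi0.

Definition a_x (E0 omega c phi0 psi chi sigma u : R) : R :=
  sqrt 2 * E0 / omega *
  (cos chi * cos (theta omega c phi0 u) * cos psi
   - sigma * sin chi * sin (theta omega c phi0 u) * sin psi).
Definition a_y (E0 omega c phi0 psi chi sigma u : R) : R :=
  sqrt 2 * E0 / omega *
  (cos chi * cos (theta omega c phi0 u) * sin psi
   + sigma * sin chi * sin (theta omega c phi0 u) * cos psi).

(* D(u) = ahat'(u) ahat'(u)^T with ahat' = (c/E0) a'; its trace *)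
Definition trD (E0 omega c phi0 psi chi sigma u : R) : R :=
  (c / E0) ^ 2 *
  ((Derive (a_x E0 omega c phi0 psi chi sigma) u) ^ 2
   + (Derive (a_y E0 omega c phi0 psi chi sigma) u) ^ 2).

Definition Ccal (G E0 c mu0 : R) : R := 4 * PI * G * E0 ^ 2 / (c ^ 6 * mu0).

Definition dT (i : tidx) (F : R -> R -> R -> R) : R -> R -> R -> R :=
  fun u x y => match i with
  | Ix => Derive (fun x' => F u x' y) x
  | Iy => Derive (fun y' => F u x y') y
  end.

Definition exdT (i : tidx) (F : R -> R -> R -> R) (u x y : R) : Prop :=
  match i with
  | Ix => ex_derive (fun x' => F u x' y) x
  | Iy => ex_derive (fun y' => F u x y') y
  end.

(* Riemann components of the Brinkmann metric: R_{uiuj} = -1/2 d_i d_j h *)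
Definition Riem (h : R -> R -> R -> R) (i j : tidx) : R -> R -> R -> R :=
  fun u x y => - / 2 * dT i (dT j h) u x y.

Definition cyc_avg (T u0 : R) (F : R -> R) : R := / T * RInt F u0 (u0 + T).

(* A family e_gamma(u,x,y) is O(gamma^2) at the level of transverse second
   derivatives: it is twice differentiable in (x,y), and at each (x,y) its
   transverse Hessian is bounded by K gamma^2 uniformly in u, for small
   nonzero gamma. *)
Definition hess_O_gamma2 (e : R -> R -> R -> R -> R) : Prop :=
  (forall gam i j u x y, exdT j (e gam) u x y /\ exdT i (dT j (e gam)) u x y) /\
  (forall x y, exists K gam0, 0 < gam0 /\
     forall gam, 0 < Rabs gam < gam0 -> forall i j u,
       Rabs (dT i (dT j (e gam)) u x y) <= K * gam ^ 2).

(* The polarization enters only through tr D(u) = 1 - cos 2chi cos 2theta(u): rotating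
   by psi leaves |a'|^2 unchanged, and the handedness sigma only appears squared.  The
   oscillating term has zero mean over a period, so tr D averages to 1.  The leading part
   of h is -C tr D(u) r^2, whose transverse Hessian is -2 C tr D(u) delta_ij, so the
   averaged curvature is C delta_ij; the remainder has Hessian O(gamma^2) uniformly in u,
   and so does its average. *)
From Stdlib Require Import Reals Lra FunctionalExtensionality.
From Coquelicot Require Import Coquelicot.
Open Scope R_scope.

Lemma Rsqr_rotation (p q s : R) :
  (p * cos s - q * sin s) ^ 2 + (p * sin s + q * cos s) ^ 2 = p ^ 2 + q ^ 2.
Proof.
  pose proof (sin2_cos2 s) as Hs; unfold Rsqr in Hs.
  replace (p ^ 2 + q ^ 2) with ((p ^ 2 + q ^ 2) * (sin s * sin s + cos s * cos s))
    by (rewrite Hs; ring).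
  ring.
Qed.

Section Carrier.

Variables E0 omega c phi0 psi chi sigma : R.
Hypotheses (hc : 0 < c) (homega : 0 < omega).

Let t u := theta omega c phi0 u.

Lemma is_derive_a_x u :
  is_derive (a_x E0 omega c phi0 psi chi sigma) u
    (sqrt 2 * E0 / c *
     ((- cos chi * sin (t u)) * cos psi - sigma * sin chi * cos (t u) * sin psi)).
Proof.
  unfold a_x, t, theta; auto_derive; auto.
  field; lra.
Qed.

Lemma is_derive_a_y u :
  is_derive (a_y E0 omega c phi0 psi chi sigma) u
    (sqrt 2 * E0 / c *
     ((- cos chi * sin (t u)) * sin psi + sigma * sin chi * cos (t u) * cos psi)).
Proof.
  unfold a_y, t, theta; auto_derive; auto.
  field; lra.
Qed.

Lemma trD_polarization u :
  0 < E0 -> sigma ^ 2 = 1 ->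
  trD E0 omega c phi0 psi chi sigma u = 1 - cos (2 * chi) * cos (2 * t u).
Proof.
  intros hE0 hsigma.
  unfold trD.
  rewrite (is_derive_unique _ _ _ (is_derive_a_x u)),
          (is_derive_unique _ _ _ (is_derive_a_y u)).
  rewrite !Rpow_mult_distr, <- Rmult_plus_distr_l, Rsqr_rotation.
  assert (Hsqrt2 : sqrt 2 ^ 2 = 2) by (simpl; rewrite Rmult_1_r; apply sqrt_sqrt; lra).
  pose proof (sin2_cos2 chi) as Hchi; pose proof (sin2_cos2 (t u)) as Ht.
  unfold Rsqr in Hchi, Ht.
  rewrite !cos_2a.
  (* 1 - cos 2chi cos 2t = 2 (cos^2 chi sin^2 t + sin^2 chi cos^2 t) *)
  replace 1 with ((sin chi * sin chi + cos chi * cos chi) * (sin (t u) * sin (t u) + cos (t u) * cos (t u)))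
    by (rewrite Hchi, Ht; ring).
  replace ((c / E0) ^ 2 * ((sqrt 2 * E0 / c) ^ 2 *
     ((- cos chi * sin (t u)) ^ 2 + (sigma * sin chi * cos (t u)) ^ 2)))
    with (sqrt 2 ^ 2 * ((cos chi * sin (t u)) ^ 2 + sigma ^ 2 * (sin chi * cos (t u)) ^ 2))
    by (field; lra).
  rewrite Hsqrt2, hsigma.
  ring.
Qed.

End Carrier.

Lemma is_RInt_cos_periods (k p a : R) (n : nat) :
  0 < k -> is_RInt (fun u => cos (k * u + p)) a (a + 2 * INR n * PI / k) 0.
Proof.
  intros hk.
  replace 0 with (minus (sin (k * (a + 2 * INR n * PI / k) + p) / k) (sin (k * a + p) / k)).
  - apply (is_RInt_derive (fun u => sin (k * u + p) / k)).
    + intros u _; auto_derive; auto.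
      field; lra.
    + intros u _.
      apply continuity_pt_filterlim, derivable_continuous_pt, ex_derive_Reals_0.
      auto_derive; auto.
  - replace (k * (a + 2 * INR n * PI / k) + p) with (k * a + p + 2 * INR n * PI)
      by (field; lra).
    rewrite sin_period.
    unfold minus, plus, opp; simpl; ring.
Qed.

Lemma is_RInt_trD E0 omega c phi0 psi chi sigma u0 :
  0 < c -> 0 < omega -> 0 < E0 -> sigma ^ 2 = 1 ->
  is_RInt (trD E0 omega c phi0 psi chi sigma) u0 (u0 + 2 * PI * c / omega)
    (2 * PI * c / omega).
Proof.
  intros hc homega hE0 hsigma.
  set (k := 2 * omega / c).
  assert (hk : 0 < k) by (unfold k; apply Rdiv_lt_0_compat; lra).
  replace (u0 + 2 * PI * c / omega) with (u0 + 2 * INR 2 * PI / k)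
    by (unfold k; simpl; field; lra).
  apply is_RInt_ext with (fun u => minus 1 (scal (cos (2 * chi)) (cos (k * u + 2 * phi0)))).
  - intros u _.
    rewrite trD_polarization by assumption.
    unfold minus, plus, opp, scal, k, theta; simpl; unfold mult; simpl.
    replace (2 * (omega / c * u + phi0)) with (2 * omega / c * u + 2 * phi0) by (field; lra).
    ring.
  - replace (2 * PI * c / omega) with (minus (scal (u0 + 2 * INR 2 * PI / k - u0) 1)
                                             (scal (cos (2 * chi)) 0)).
    + apply (is_RInt_minus (V := R_NormedModule)).
      * apply (is_RInt_const (V := R_NormedModule)).
      * apply (is_RInt_scal (V := R_NormedModule)), is_RInt_cos_periods, hk.
    + unfold minus, plus, opp, scal, k; simpl; unfold mult; simpl.
      field; lra.
Qed.

Lemma cyc_avg_near_mean (T u0 m M : R) (F f g : R -> R) :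
  0 < T ->
  ex_RInt F u0 (u0 + T) ->
  is_RInt f u0 (u0 + T) (T * m) ->
  (forall u, F u = f u + g u) ->
  (forall u, Rabs (g u) <= M) ->
  Rabs (cyc_avg T u0 F - m) <= M.
Proof.
  intros hT hF hf hFfg hg.
  assert (hg_int : ex_RInt g u0 (u0 + T)).
  { apply (ex_RInt_ext (V := R_NormedModule) (fun u => minus (F u) (f u))).
    - intros u _; rewrite hFfg; unfold minus, plus, opp; simpl; ring.
    - apply (ex_RInt_minus (V := R_NormedModule)); [exact hF | exists (T * m); exact hf]. }
  assert (hRInt : RInt F u0 (u0 + T) = T * m + RInt g u0 (u0 + T)).
  { rewrite (RInt_ext (V := R_CompleteNormedModule) F (fun u => plus (f u) (g u)))
      by (intros; apply hFfg).
    rewrite (RInt_plus (V := R_CompleteNormedModule))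
      by first [assumption | exists (T * m); exact hf].
    rewrite (is_RInt_unique f _ _ _ hf); reflexivity. }
  assert (hbound : Rabs (RInt g u0 (u0 + T)) <= T * M).
  { replace (T * M) with ((u0 + T - u0) * M) by ring.
    apply abs_RInt_le_const; auto; lra. }
  unfold cyc_avg; rewrite hRInt.
  replace (/ T * (T * m + RInt g u0 (u0 + T)) - m) with (/ T * RInt g u0 (u0 + T))
    by (field; lra).
  rewrite Rabs_mult, Rabs_inv, (Rabs_right T) by lra.
  apply Rmult_le_reg_l with T; [exact hT |].
  replace (T * (/ T * Rabs (RInt g u0 (u0 + T)))) with (Rabs (RInt g u0 (u0 + T)))
    by (field; lra).
  exact hbound.
Qed.

Definition coord (i : tidx) (x y : R) : R := match i with Ix => x | Iy => y end.

Lemma dT_radial_plus i (a : R -> R) (e : R -> R -> R -> R) u x y :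
  exdT i e u x y ->
  dT i (fun u x y => a u * (x ^ 2 + y ^ 2) + e u x y) u x y
    = 2 * a u * coord i x y + dT i e u x y.
Proof.
  destruct i; cbn [dT exdT coord]; intros he.
  - rewrite (Derive_plus (fun x' => a u * (x' ^ 2 + y ^ 2)))
      by first [exact he | auto_derive; auto].
    f_equal; apply is_derive_unique; auto_derive; auto; ring.
  - rewrite (Derive_plus (fun y' => a u * (x ^ 2 + y' ^ 2)))
      by first [exact he | auto_derive; auto].
    f_equal; apply is_derive_unique; auto_derive; auto; ring.
Qed.

Lemma dT_coord_plus i j (a : R -> R) (e : R -> R -> R -> R) u x y :
  exdT i e u x y ->
  dT i (fun u x y => 2 * a u * coord j x y + e u x y) u x y
    = 2 * a u * kdelta i j + dT i e u x y.
Proof.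
  destruct i, j; cbn [dT exdT coord kdelta]; intros he.
  - rewrite (Derive_plus (fun x' => 2 * a u * x'))
      by first [exact he | auto_derive; auto].
    f_equal; apply is_derive_unique; auto_derive; auto; ring.
  - rewrite (Derive_plus (fun _ => 2 * a u * y))
      by first [exact he | auto_derive; auto].
    f_equal; apply is_derive_unique; auto_derive; auto; ring.
  - rewrite (Derive_plus (fun _ => 2 * a u * x))
      by first [exact he | auto_derive; auto].
    f_equal; apply is_derive_unique; auto_derive; auto; ring.
  - rewrite (Derive_plus (fun y' => 2 * a u * y'))
      by first [exact he | auto_derive; auto].
    f_equal; apply is_derive_unique; auto_derive; auto; ring.
Qed.

Lemma Riem_radial_plus i j (F e : R -> R -> R -> R) (a : R -> R) u x y :
  (forall u x y, F u x y = a u * (x ^ 2 + y ^ 2) + e u x y) ->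
  (forall u x y, exdT j e u x y) -> exdT i (dT j e) u x y ->
  Riem F i j u x y = - a u * kdelta i j + Riem e i j u x y.
Proof.
  intros hF hej hei.
  replace F with (fun u x y => a u * (x ^ 2 + y ^ 2) + e u x y)
    by (do 3 (apply functional_extensionality; intro); symmetry; apply hF).
  unfold Riem.
  replace (dT j (fun u x y => a u * (x ^ 2 + y ^ 2) + e u x y))
    with (fun u x y => 2 * a u * coord j x y + dT j e u x y).
  - rewrite dT_coord_plus by exact hei; field.
  - do 3 (apply functional_extensionality; intro).
    symmetry; apply dT_radial_plus, hej.
Qed.

Theorem proposition1
  (G c mu0 E0 omega phi0 psi chi sigma : R)
  (hG : 0 < G) (hc : 0 < c) (hmu0 : 0 < mu0) (hE0 : 0 < E0) (homega : 0 < omega)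
  (hchi : - (PI / 4) <= chi <= PI / 4) (hsigma : sigma = 1 \/ sigma = -1)
  (h : R -> R -> R -> R -> R)  (* h gamma u x y *)
  (hdecomp : exists e : R -> R -> R -> R -> R,
      hess_O_gamma2 e /\
      forall gam u x y,
        h gam u x y =
          - Ccal G E0 c mu0 * trD E0 omega c phi0 psi chi sigma u * (x ^ 2 + y ^ 2)
          + e gam u x y)
  (hint : forall gam i j x y u0,
      ex_RInt (fun u => Riem (h gam) i j u x y) u0 (u0 + 2 * PI * c / omega)) :
  forall (i j : tidx) (x y : R),
    exists K gam0, 0 < gam0 /\
      forall gam, 0 < Rabs gam < gam0 -> forall u0 : R,
        Rabs (cyc_avg (2 * PI * c / omega) u0 (fun u => Riem (h gam) i j u x y)
              - Ccal G E0 c mu0 * kdelta i j) <= K * gam ^ 2.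
Proof.
  intros i j x y.
  destruct hdecomp as [e [[hex hbound] hh]].
  destruct (hbound x y) as [K [gam0 [hgam0 hK]]].
  exists (K / 2), gam0; split; [exact hgam0 |].
  intros gam hgam u0.
  set (Cdelta := Ccal G E0 c mu0 * kdelta i j).
  set (tr := trD E0 omega c phi0 psi chi sigma).
  assert (hT : 0 < 2 * PI * c / omega)
    by (pose proof PI_RGT_0; apply Rdiv_lt_0_compat; nra).
  assert (hsigma2 : sigma ^ 2 = 1) by (destruct hsigma; subst; ring).
  apply cyc_avg_near_mean with (fun u => Cdelta * tr u) (fun u => Riem (e gam) i j u x y).
  - exact hT.
  - apply hint.
  - rewrite (Rmult_comm _ Cdelta).
    apply (is_RInt_scal (V := R_NormedModule)), is_RInt_trD; assumption.
  - intros u.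
    rewrite (Riem_radial_plus i j (h gam) (e gam) (fun u => - Ccal G E0 c mu0 * tr u)).
    + unfold Cdelta; ring.
    + intros; apply hh.
    + intros u' x' y'; exact (proj1 (hex gam j j u' x' y')).
    + exact (proj2 (hex gam i j u x y)).
  - intros u; unfold Riem.
    rewrite Rabs_mult, Rabs_Ropp, Rabs_inv, (Rabs_right 2) by lra.
    pose proof (hK gam hgam i j u); lra.
Qed.
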